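(* Assume the variety $\mathbf K$ axiomatized by $E$ satisfies (IT), is coherent and has the $\forall$-factorization property. Let $X,C$ be finite sets, $\mathcal A^*\in\mathsf{Sub}_r(\mathbf F(X)^*\times\mathbf F(C)^* )$, and let $\mathcal B_1^*,\dots,\mathcal B_n^*\in\mathsf{Sub}_r(\mathbf F(X)^* )$ be such that (a) $\pi_{\mathbf F(X)^*}^{-1}(\mathcal B_i^* )\le\mathcal A^*$ for all $i$, and (b) for every $\mathcal D^*\in\mathsf{Sub}_r(\mathbf F(X)^* )$ with $\pi_{\mathbf F(X)^*}^{-1}(\mathcal D^* )\le\mathcal A^*$ there is $i$ with $\mathcal D^*\le\mathcal B_i^*$. Then a homomorphism $\sigma:\mathbf F(X)\to\mathbf F(Z)$ is a $C$-unifier of $(\mathcal A,C)$ iff it is a unifier of some $\mathcal B_i$; that is, $U^{svr}_E(\mathcal A,C)=U_E(\mathcal B_1)\cup\dots\cup U_E(\mathcal B_n)$, as preordered sets (with the same preorder).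
   Context: $\mathbf F(Y)$ is the free $E$-algebra on finite $Y$; $\mathsf{Alg}^{op}_{fp}(E)$ is the opposite of the category of finitely presented $E$-algebras ($\mathcal B^*,f^*$ formal duals). $\mathsf{Sub}_r(V)$ is the poset of regular subobjects, $g^{-1}$ pullback, $\pi$ projections; regular subobjects of $\mathcal B^*$ correspond to finitely presented quotients of $\mathcal B$. (IT): whenever $f:\mathcal A\to\mathcal B$ is a homomorphism and $g:\mathcal A\to\mathcal C$ an injective homomorphism, there exist a homomorphism $h:\mathcal C\to\mathcal E$ and injective $h':\mathcal B\to\mathcal E$ with $h'f=hg$. Coherent: finitely generated subalgebras of finitely presented algebras are finitely presented. $\forall$-factorization property: for all objects $V,W$ of $\mathsf{Alg}^{op}_{fp}(E)$ and $T\in\mathsf{Sub}_r(V\times W)$ there are finitely many $B_1,\dots,B_n\in\mathsf{Sub}_r(W)$ with $\pi_W^{-1}(B_i)\le T$ and such that every $D\in\mathsf{Sub}_r(W)$ with $\pi_W^{-1}(D)\le T$ satisfies $D\le B_i$ for some $i$. A $C$-unifier of $(\mathcal A,C)$ is a homomorphism $\sigma:\mathbf F(X)\to\mathbf F(Z)$ with $\sigma^*\times1:\mathbf F(Z)^*\times\mathbf F(C)^*\to\mathbf F(X)^*\times\mathbf F(C)^*$ factoring through $\mathcal A^*\hookrightarrow\mathbf F(X)^*\times\mathbf F(C)^*$; $U^{svr}_E(\mathcal A,C)$ is the set of these. A unifier of $\mathcal B_i$ (case $C=\emptyset$) is a homomorphism $\sigma:\mathbf F(X)\to\mathbf F(Z)$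 factoring through the quotient map $\mathbf F(X)\to\mathcal B_i$; $U_E(\mathcal B_i)$ is the set of these. In both sets, $\gamma:\mathbf F(X)\to\mathbf F(W)$ is below $\sigma:\mathbf F(X)\to\mathbf F(Z)$ iff $k\circ\sigma=\gamma$ for some homomorphism $k:\mathbf F(Z)\to\mathbf F(W)$. *)

From Stdlib Require Import List ClassicalEpsilon.
From mathcomp Require Import all_boot.

Set Implicit Arguments.
Unset Strict Implicit.
Unset Printing Implicit Defensive.

Record signature := Signature { sym :> Type; arity : sym -> nat }.

Inductive term (Sg : signature) (V : Type) : Type :=
| Var : V -> term Sg V
| Op : forall o : Sg, ('I_(arity o) -> term Sg V) -> term Sg V.
Arguments Var {Sg V}.
Arguments Op {Sg V}.

Fixpoint subst (Sg : signature) (V W : Type) (s : V -> term Sg W)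
  (t : term Sg V) : term Sg W :=
  match t with
  | Var x => s x
  | Op o args => Op o (fun i => subst s (args i))
  end.

Definition tmap (Sg : signature) (V W : Type) (f : V -> W) (t : term Sg V)
  : term Sg W := subst (fun x => Var (f x)) t.

Definition teq (Sg : signature) (V : Type) := (term Sg V * term Sg V)%type.

Definition eqmap (Sg : signature) (V W : Type) (f : V -> W) (p : teq Sg V)
  : teq Sg W := (tmap f p.1, tmap f p.2).

Definition theory (Sg : signature) := teq Sg nat -> Prop.

Record alg (Sg : signature) := Alg {
  carrier :> Type;
  ops : forall o : Sg, ('I_(arity o) -> carrier) -> carrier }.

Fixpoint eval (Sg : signature) (A : alg Sg) (V : Type) (v : V -> A)
  (t : term Sg V) : A :=
  match t with
  | Var x => v x
  | Op o args => @ops _ A o (fun i => eval v (args i))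
  end.

Definition models (Sg : signature) (E : theory Sg) (A : alg Sg) : Prop :=
  forall e, E e -> forall v : nat -> A, eval v e.1 = eval v e.2.

Record hom (Sg : signature) (A B : alg Sg) := Hom {
  hfun :> A -> B;
  hmorph : forall o (args : 'I_(arity o) -> A),
      hfun (@ops _ A o args) = @ops _ B o (fun i => hfun (args i)) }.

(* deriv E S s t : the pair (s,t) of terms over Y lies in the least
   congruence of the term algebra over Y containing all substitution
   instances of E and all pairs of S; i.e. s = t in F(Y)/Cg(S). *)
Inductive deriv (Sg : signature) (E : theory Sg) (Y : Type)
  (S : list (teq Sg Y)) : term Sg Y -> term Sg Y -> Prop :=
| d_refl t : deriv E S t t
| d_sym s t : deriv E S s t -> deriv E S t s
| d_trans s t u : deriv E S s t -> deriv E S t u -> deriv E S s u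
| d_cong o (a1 a2 : 'I_(arity o) -> term Sg Y) :
    (forall i, deriv E S (a1 i) (a2 i)) -> deriv E S (Op o a1) (Op o a2)
| d_ax e (s : nat -> term Sg Y) : E e -> deriv E S (subst s e.1) (subst s e.2)
| d_hyp p : List.In p S -> deriv E S p.1 p.2.

Definition pres_car (Sg : signature) (E : theory Sg) (Y : Type)
  (S : list (teq Sg Y)) : Type :=
  {P : term Sg Y -> Prop | exists t, P = deriv E S t}.

Definition cls (Sg : signature) (E : theory Sg) (Y : Type)
  (S : list (teq Sg Y)) (t : term Sg Y) : pres_car E S :=
  exist _ (deriv E S t) (ex_intro _ t erefl).

Definition rep (Sg : signature) (E : theory Sg) (Y : Type)
  (S : list (teq Sg Y)) (c : pres_car E S) : term Sg Y :=
  proj1_sig (constructive_indefinite_description _ (proj2_sig c)).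

Definition Pres (Sg : signature) (E : theory Sg) (Y : Type)
  (S : list (teq Sg Y)) : alg Sg :=
  @Alg Sg (pres_car E S)
    (fun o args => cls E S (Op o (fun i => rep (args i)))).

Definition F (Sg : signature) (E : theory Sg) (Y : Type) : alg Sg :=
  Pres E (Y := Y) nil.

Definition fmapF (Sg : signature) (E : theory Sg) (Y Y' : Type) (f : Y -> Y')
  (c : F E Y) : F E Y' := cls E nil (tmap f (rep c)).

Definition IT (Sg : signature) (E : theory Sg) : Prop :=
  forall (A B C : alg Sg), models E A -> models E B -> models E C ->
  forall (f : hom A B) (g : hom A C), injective g ->
  exists (D : alg Sg) (h : hom C D) (h' : hom B D),
    models E D /\ injective h' /\ forall a, h' (f a) = h (g a).

Definition fin_presented (Sg : signature) (E : theory Sg) (A : alg Sg) : Prop :=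
  exists (Y : finType) (S : list (teq Sg Y)) (h : hom (Pres E S) A),
    bijective h.

Inductive gen (Sg : signature) (A : alg Sg) (Y : Type) (a : Y -> A) : A -> Prop :=
| gen_var y : gen a (a y)
| gen_op o (args : 'I_(arity o) -> A) :
    (forall i, gen a (args i)) -> gen a (@ops _ A o args).

(* coherence: finitely generated subalgebras of finitely presented algebras
   are finitely presented (i.e. isomorphic to some F(Y')/Cg(S')) *)
Definition coherent (Sg : signature) (E : theory Sg) : Prop :=
  forall A : alg Sg, models E A -> fin_presented E A ->
  forall (Y : finType) (a : Y -> A),
  exists (Y' : finType) (S' : list (teq Sg Y')) (h : hom (Pres E S') A),
    injective h /\ forall x, gen a x <-> exists p, h p = x.

(* Over an object presented as F(Y)/Cg(S0), a regular subobject is given by a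
   finite set D of extra equations (the quotient F(Y)/Cg(S0 ++ D)).
   sub_le E S0 D1 D2 : D1^* <= D2^*, i.e. the quotient by D2 maps onto the
   quotient by D1 compatibly: Cg(S0 ++ D2) is contained in Cg(S0 ++ D1). *)
Definition sub_le (Sg : signature) (E : theory Sg) (Y : Type)
  (S0 D1 D2 : list (teq Sg Y)) : Prop :=
  forall s t, deriv E (S0 ++ D2) s t -> deriv E (S0 ++ D1) s t.

(* presentation of the coproduct V + W  (the product V^* x W^* in Alg_fp^op) *)
Definition coprod_rel (Sg : signature) (Y1 Y2 : Type)
  (S1 : list (teq Sg Y1)) (S2 : list (teq Sg Y2)) : list (teq Sg (Y1 + Y2)) :=
  map (eqmap inl) S1 ++ map (eqmap inr) S2.

(* forall-factorization property, for V = F(Y1)/Cg(S1), W = F(Y2)/Cg(S2);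
   pi_W^{-1}(D) is the quotient of V + W by the image of D. *)
Definition forall_factorization (Sg : signature) (E : theory Sg) : Prop :=
  forall (Y1 Y2 : finType) (S1 : list (teq Sg Y1)) (S2 : list (teq Sg Y2))
         (T : list (teq Sg (Y1 + Y2))),
  exists Bs : list (list (teq Sg Y2)),
    (forall Bi, List.In Bi Bs ->
       sub_le E (coprod_rel S1 S2) (map (eqmap inr) Bi) T) /\
    (forall D : list (teq Sg Y2),
       sub_le E (coprod_rel S1 S2) (map (eqmap inr) D) T ->
       exists Bi, List.In Bi Bs /\ sub_le E S2 D Bi).

(* the assignment  X + C -> F(Z + C)  underlying sigma + 1 *)
Definition sigma_plus (Sg : signature) (E : theory Sg) (X C Z : Type)
  (sigma : hom (F E X) (F E Z)) (v : X + C) : F E (Z + C) :=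
  match v with
  | inl x => fmapF inl (sigma (cls E nil (Var x)))
  | inr c => cls E nil (Var (inr c))
  end.

(* sigma is a C-unifier of (A, C), A = F(X+C)/Cg(SA): sigma + 1 factors
   through the quotient map F(X + C) -> A. *)
Definition C_unifier (Sg : signature) (E : theory Sg) (X C Z : Type)
  (SA : list (teq Sg (X + C))) (sigma : hom (F E X) (F E Z)) : Prop :=
  forall p, List.In p SA ->
    eval (sigma_plus sigma) p.1 = eval (sigma_plus sigma) p.2.

(* sigma is a unifier of B = F(X)/Cg(SB): sigma factors through F(X) -> B *)
Definition unifier (Sg : signature) (E : theory Sg) (X Z : Type)
  (SB : list (teq Sg X)) (sigma : hom (F E X) (F E Z)) : Prop :=
  forall p, List.In p SB -> sigma (cls E nil p.1) = sigma (cls E nil p.2).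

Definition unif_le (Sg : signature) (E : theory Sg) (X Z W : Type)
  (gamma : hom (F E X) (F E W)) (sigma : hom (F E X) (F E Z)) : Prop :=
  exists k : hom (F E Z) (F E W), forall x, k (sigma x) = gamma x.

From Stdlib Require Import List ClassicalEpsilon FunctionalExtensionality.
From Stdlib Require Import PropExtensionality ProofIrrelevance.
From mathcomp Require Import all_boot.

Set Implicit Arguments.
Unset Strict Implicit.
Unset Printing Implicit Defensive.

(* If sigma unifies B_i then, by (a), every equation of A follows from B_i
   under F(X) -> F(X + C), so sigma + 1 satisfies A.  Conversely, coherence
   gives a finite presentation D of the image of sigma, a finitely generated
   subalgebra of F(Z), so that F(X)/D embeds into F(Z).  Applying (IT) to this
   embedding and to F(X)/D -> F(X + C)/D yields an algebra V into which
   F(X + C)/D embeds and F(Z) maps; composing sigma + 1 with F(Z) -> V shows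
   that every equation of A holds in F(X + C)/D, i.e. pi^-1(D^* ) <= A^*.
   By (b), D^* <= B_i^* for some i, hence sigma unifies B_i.  The
   forall-factorization property only guarantees that such B_i exist. *)

Lemma In_map {A B : Type} (f : A -> B) {x : A} {l : seq A} :
  In x l -> In (f x) (map f l).
Proof. by elim: l => //= y l IH [->|/IH]; [left|right]. Qed.

Lemma In_map_inv {A B : Type} {f : A -> B} {y : B} {l : seq A} :
  In y (map f l) -> exists2 x, y = f x & In x l.
Proof.
elim: l => //= x l IH [<-|/IH [z -> Hz]]; first by exists x; [|left].
by exists z; [|right].
Qed.

Lemma In_cat {A : Type} {x : A} {l1 l2 : seq A} :
  In x (l1 ++ l2) <-> In x l1 \/ In x l2.
Proof. by elim: l1 => [|y l1 IH] /=; [tauto | rewrite IH; tauto]. Qed.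

Lemma In_enum (T : finType) (x : T) : In x (enum T).
Proof.
have : x \in enum T by rewrite mem_enum.
by elim: (enum T) => //= y s IH; rewrite in_cons => /orP [/eqP ->|/IH]; [left|right].
Qed.

Section Presentations.

Variables (Sg : signature) (E : theory Sg).

Lemma eq_eval (A : alg Sg) V (v1 v2 : V -> A) t :
  (forall x, v1 x = v2 x) -> eval v1 t = eval v2 t.
Proof. by move=> /functional_extensionality ->. Qed.

Lemma subst_var Y (t : term Sg Y) : subst Var t = t.
Proof. by elim: t => //= o args IH; congr Op; apply: functional_extensionality. Qed.

Lemma subst_comp V W U (psi : W -> term Sg U) (s : V -> term Sg W) t :
  subst psi (subst s t) = subst (fun x => subst psi (s x)) t.
Proof. by elim: t => //= o args IH; congr Op; apply: functional_extensionality. Qed.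

Lemma eval_subst (A : alg Sg) V W (v : W -> A) (psi : V -> term Sg W) t :
  eval v (subst psi t) = eval (fun x => eval v (psi x)) t.
Proof. by elim: t => //= o args IH; congr ops; apply: functional_extensionality. Qed.

Lemma hom_eval (A B : alg Sg) (k : hom A B) V (v : V -> A) t :
  k (eval v t) = eval (fun x => k (v x)) t.
Proof.
by elim: t => //= o args IH; rewrite hmorph; congr ops; apply: functional_extensionality.
Qed.

Lemma deriv_sound (A : alg Sg) Y (S : list (teq Sg Y)) (v : Y -> A) :
  models E A -> (forall p, In p S -> eval v p.1 = eval v p.2) ->
  forall s t, deriv E S s t -> eval v s = eval v t.
Proof.
move=> HA HS s t.
elim=> {s t} [//|s t _ ->|s t u _ -> _ ->|o a1 a2 _ IH|e s He|p /HS] //=.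
- by congr ops; apply: functional_extensionality.
- by rewrite !eval_subst; apply: HA.
Qed.

Lemma deriv_subst Y Y' (S : list (teq Sg Y)) (S' : list (teq Sg Y'))
    (psi : Y -> term Sg Y') :
  (forall p, In p S -> deriv E S' (subst psi p.1) (subst psi p.2)) ->
  forall s t, deriv E S s t -> deriv E S' (subst psi s) (subst psi t).
Proof.
move=> HS s t; elim=> {s t} /=.
- by move=> t; apply: d_refl.
- by move=> s t _; apply: d_sym.
- by move=> s t u _ H1 _ H2; apply: d_trans H1 H2.
- by move=> o a1 a2 _; apply: d_cong.
- by move=> e s He; rewrite !subst_comp; apply: d_ax.
- exact: HS.
Qed.

Lemma deriv_weaken Y (S S' : list (teq Sg Y)) :
  (forall p, In p S -> deriv E S' p.1 p.2) ->
  forall s t, deriv E S s t -> deriv E S' s t.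
Proof.
move=> HS s t /(@deriv_subst _ _ S S' Var); rewrite !subst_var; apply=> p.
by rewrite !subst_var; apply: HS.
Qed.

Lemma cls_eq Y (S : list (teq Sg Y)) s t : cls E S s = cls E S t <-> deriv E S s t.
Proof.
split=> [/(f_equal (@proj1_sig _ _)) /= -> | Hst]; first exact: d_refl.
apply: eq_sig_hprop => [? ? ?|/=]; first exact: proof_irrelevance.
apply: functional_extensionality => u; apply: propositional_extensionality.
by split=> [Hsu|Htu]; [apply: d_trans (d_sym Hst) Hsu | apply: d_trans Hst Htu].
Qed.

Lemma cls_rep Y (S : list (teq Sg Y)) (c : pres_car E S) : cls E S (rep c) = c.
Proof.
apply: eq_sig_hprop => [? ? ?|/=]; first exact: proof_irrelevance.
by rewrite /rep; case: constructive_indefinite_description => t /= ->.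
Qed.

Lemma rep_cls Y (S : list (teq Sg Y)) t : deriv E S (rep (cls E S t)) t.
Proof. by apply/cls_eq; rewrite cls_rep. Qed.

Lemma eval_cls_subst Y Y' (S : list (teq Sg Y')) (psi : Y -> term Sg Y') t :
  @eval Sg (Pres E S) Y (fun y => cls E S (psi y)) t = cls E S (subst psi t).
Proof.
elim: t => //= o args IH; apply/cls_eq/d_cong => i; rewrite IH; exact: rep_cls.
Qed.

Lemma eval_cls Y (S : list (teq Sg Y)) t :
  @eval Sg (Pres E S) Y (fun y => cls E S (Var y)) t = cls E S t.
Proof. by rewrite eval_cls_subst subst_var. Qed.

Lemma hom_cls (A : alg Sg) Y (S : list (teq Sg Y)) (k : hom (Pres E S) A) t :
  k (cls E S t) = eval (fun y => k (cls E S (Var y))) t.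
Proof. by rewrite -eval_cls hom_eval. Qed.

Lemma Pres_models Y (S : list (teq Sg Y)) : models E (Pres E S).
Proof.
move=> e He v; rewrite -(functional_extensionality _ _ (fun n => cls_rep (v n))).
by rewrite !eval_cls_subst; apply/cls_eq/d_ax.
Qed.
Arguments Pres_models {Y} S.

Lemma F_fin_presented (Z : finType) : fin_presented E (F E Z).
Proof. by exists Z, nil, (@Hom Sg (F E Z) (F E Z) id (fun _ _ => erefl)); exists id. Qed.

Lemma Pres_lift (A : alg Sg) Y (S : list (teq Sg Y)) (v : Y -> A) :
  models E A -> (forall p, In p S -> eval v p.1 = eval v p.2) ->
  exists k : hom (Pres E S) A, forall t, k (cls E S t) = eval v t.
Proof.
move=> HA HS.
have Hrep t : eval v (rep (cls E S t)) = eval v t.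
  exact: deriv_sound HA HS _ _ (rep_cls S t).
by unshelve eexists (@Hom _ (Pres E S) A (fun c => eval v (rep c)) _) => /=.
Qed.

Lemma Pres_map Y Y' (r : Y -> Y') (S : list (teq Sg Y)) :
  exists f : hom (Pres E S) (Pres E (map (eqmap r) S)),
    forall t, f (cls E S t) = cls E _ (tmap r t).
Proof.
pose v y : Pres E (map (eqmap r) S) := cls E _ (Var (r y)).
have Hv p : In p S -> eval v p.1 = eval v p.2.
  move=> Hp; rewrite !eval_cls_subst; apply/cls_eq.
  exact: (d_hyp E (p := eqmap r p)) (In_map (eqmap r) Hp).
have [f Hf] := Pres_lift (Pres_models _) Hv.
by exists f => t; rewrite Hf eval_cls_subst.
Qed.

Lemma fmapF_cls Y Y' (r : Y -> Y') t : fmapF r (cls E nil t) = cls E nil (tmap r t).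
Proof. by apply/cls_eq; apply: deriv_subst (rep_cls _ _) => p []. Qed.

Lemma fmapF_morph Y Y' (r : Y -> Y') o (args : 'I_(arity o) -> F E Y) :
  fmapF r (@ops _ (F E Y) o args) = @ops _ (F E Y') o (fun i => fmapF r (args i)).
Proof.
rewrite /= fmapF_cls; apply/cls_eq/d_cong => i.
by apply: d_sym; apply: rep_cls.
Qed.

Definition fmap_hom Y Y' (r : Y -> Y') : hom (F E Y) (F E Y') :=
  Hom (@fmapF_morph Y Y' r).

Lemma gen_eval (A : alg Sg) Y (a : Y -> A) x : gen a x -> exists u, eval a u = x.
Proof.
elim=> [y|o args _ /choice [us Hus]]; first by exists (Var y).
by exists (Op o us) => /=; congr ops; apply: functional_extensionality.
Qed.

(* D presents the subalgebra of A generated by a. *)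
Definition kernel_presentation (A : alg Sg) X (a : X -> A) (D : list (teq Sg X)) :=
  forall u v, eval a u = eval a v <-> deriv E D u v.

Lemma kernel_presentation_embedding (A : alg Sg) X (a : X -> A) D :
  models E A -> kernel_presentation a D ->
  exists2 g : hom (Pres E D) A, injective g & forall t, g (cls E D t) = eval a t.
Proof.
move=> HA HD; have [|g Hg] := @Pres_lift _ _ D a HA.
  by move=> p Hp; apply/HD/d_hyp.
exists g => // c1 c2; rewrite -(cls_rep c1) -(cls_rep c2) !Hg => /HD.
by move/cls_eq.
Qed.

(* A Tietze transformation: phi and psi translate between the generators Y of
   the presentation S and the generators a of the same subalgebra of A. *)
Lemma kernel_presentation_transfer (A : alg Sg) (X : finType) (a : X -> A)
    Y (S : list (teq Sg Y)) (h : hom (Pres E S) A)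
    (phi : X -> term Sg Y) (psi : Y -> term Sg X) :
  models E A -> injective h ->
  (forall x, h (cls E S (phi x)) = a x) ->
  (forall y, eval a (psi y) = h (cls E S (Var y))) ->
  kernel_presentation a
    (map (fun x => (Var x, subst psi (phi x))) (enum X)
     ++ map (fun p => (subst psi p.1, subst psi p.2)) S).
Proof.
move=> HA hinj Hphi Hpsi.
set Dgen := map _ (enum X); set Drel := map _ S.
have Hpsi_t t : eval a (subst psi t) = h (cls E S t).
  by rewrite eval_subst hom_cls; apply: eq_eval.
have Hphi_u u : h (cls E S (subst phi u)) = eval a u.
  by rewrite hom_cls eval_subst; apply: eq_eval => x; rewrite -hom_cls Hphi.
have Hround w : deriv E (Dgen ++ Drel) w (subst psi (subst phi w)).
  elim: w => [x|o args IH] /=; last exact: d_cong.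
  apply: (d_hyp E (p := (Var x, subst psi (phi x)))); apply/In_cat; left.
  exact: In_map _ (In_enum x).
move=> u v; split=> [Huv|].
- have /cls_eq Hphi_uv : cls E S (subst phi u) = cls E S (subst phi v).
    by apply: hinj; rewrite !Hphi_u.
  apply: d_trans (Hround u) (d_trans _ (d_sym (Hround v))).
  apply: deriv_subst Hphi_uv => p Hp.
  apply: (d_hyp E (p := (subst psi p.1, subst psi p.2))).
  by apply/In_cat; right; apply: In_map.
- apply: (deriv_sound HA) => p /In_cat [] Hp.
  + by have [x -> _] := In_map_inv Hp; rewrite /= Hpsi_t Hphi.
  + have [q -> Hq] := In_map_inv Hp; rewrite /= !Hpsi_t.
    by congr (h _); apply/cls_eq/d_hyp.
Qed.

Lemma coherent_kernel_presentation (A : alg Sg) (X : finType) (a : X -> A) :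
  coherent E -> models E A -> fin_presented E A -> exists D, kernel_presentation a D.
Proof.
move=> Hcoh HA HAfp; have [Y [S [h [hinj himg]]]] := Hcoh A HA HAfp X a.
have /choice [psi Hpsi] : forall y, exists t, eval a t = h (cls E S (Var y)).
  by move=> y; apply/gen_eval/himg; exists (cls E S (Var y)).
have /choice [phi Hphi] : forall x, exists t, h (cls E S t) = a x.
  move=> x; have [c <-] := (himg (a x)).1 (gen_var a x).
  by exists (rep c); rewrite cls_rep.
by eexists; apply: kernel_presentation_transfer HA hinj Hphi Hpsi.
Qed.

Section Unifiers.

Variables (X C Z : Type) (sigma : hom (F E X) (F E Z)).

Let a (x : X) : F E Z := sigma (cls E nil (Var x)).

Lemma eval_sigma_plus_inl t :
  eval (sigma_plus (C := C) sigma) (tmap inl t) = fmapF inl (sigma (cls E nil t)).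
Proof.
by rewrite eval_subst /= hom_cls -[fmapF _ _]/(fmap_hom inl _) hom_eval.
Qed.

Lemma unifier_of_kernel D (SB : list (teq Sg X)) :
  kernel_presentation a D -> sub_le E nil D SB -> unifier SB sigma.
Proof. by move=> HD Hle p Hp; rewrite !hom_cls; apply/HD/Hle/d_hyp. Qed.

Lemma C_unifier_of_unifier (SA : list (teq Sg (X + C))) (SB : list (teq Sg X)) :
  sub_le E nil (map (eqmap inl) SB) SA -> unifier SB sigma -> C_unifier SA sigma.
Proof.
move=> Hle Hu p Hp; move: (Hle _ _ (d_hyp E Hp)); apply: (deriv_sound (Pres_models _)).
by move=> _ /= /In_map_inv [q -> Hq] /=; rewrite !eval_sigma_plus_inl Hu.
Qed.

Lemma C_unifier_kernel_sub_le (SA : list (teq Sg (X + C))) D :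
  IT E -> kernel_presentation a D -> C_unifier SA sigma ->
  sub_le E nil (map (eqmap inl) D) SA.
Proof.
move=> HIT HD Hcu; set DC := map (eqmap inl) D.
have [g ginj Hg] := kernel_presentation_embedding (Pres_models _) HD.
have [f Hf] := Pres_map (@inl X C) D.
have [V [h [h' [HV [h'inj Hcomm]]]]] :=
  HIT _ _ _ (Pres_models _) (Pres_models _) (Pres_models _) f g ginj.
pose vK (zc : Z + C) := match zc with
  | inl z => h (cls E nil (Var z))
  | inr c => h' (cls E DC (Var (inr c))) end.
have [K HK] := @Pres_lift V _ nil vK HV (fun p (Hp : In p nil) => match Hp with end).
have HK_inl c : K (fmapF inl c) = h c.
  by rewrite -(cls_rep c) fmapF_cls HK eval_subst [RHS]hom_cls.
have HK_sigma v : K (sigma_plus sigma v) = h' (cls E DC (Var v)).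
  case: v => [x|c] /=; last by rewrite HK.
  by rewrite HK_inl -[_ (cls _ _ _)]/(eval a (Var x)) -Hg -Hcomm Hf.
move=> s t; apply: deriv_weaken => p Hp; apply/cls_eq/h'inj.
by rewrite !hom_cls -!(eq_eval _ HK_sigma) -!hom_eval (Hcu p Hp).
Qed.

End Unifiers.

End Presentations.

Theorem mainTheorem9 (Sg : signature) (E : theory Sg)
  (HIT : IT E) (Hcoh : coherent E) (Hfact : forall_factorization E)
  (X C : finType) (SA : list (teq Sg (X + C)))
  (n : nat) (B : 'I_n -> list (teq Sg X))
  (Ha : forall i, sub_le E nil (map (eqmap inl) (B i)) SA)
  (Hb : forall D : list (teq Sg X),
      sub_le E nil (map (eqmap inl) D) SA -> exists i, sub_le E nil D (B i)) :
  forall (Z : finType) (sigma : hom (F E X) (F E Z)),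
    C_unifier SA sigma <-> exists i : 'I_n, unifier (B i) sigma.
Proof.
move=> Z sigma; split=> [Hcu|[i Hi]]; last exact: C_unifier_of_unifier (Ha i) Hi.
have [D HD] := coherent_kernel_presentation (fun x => sigma (cls E nil (Var x)))
  Hcoh (@Pres_models _ E Z nil) (F_fin_presented E Z).
have [i HDi] := Hb D (C_unifier_kernel_sub_le HIT HD Hcu).
by exists i; apply: unifier_of_kernel HD HDi.
Qed.
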